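(* Assume Condition (C) and $\lambda/2<h<\lambda$. If $\eta\in\mathcal X$ contains a pair of nearest-neighbour sites $i,j\in\Lambda$ with $\eta(i)=+1$, $\eta(j)=-1$, then there is a downhill path (one along which $H$ is non-increasing) from $\eta$ to a configuration $\eta'$ with $H(\eta')<H(\eta)$; in particular $V_\eta=0$.
   Context: Let $\Lambda=\{1,\dots,L\}^2$, $\mathcal X=\{-1,0,+1\}^\Lambda$, $\partial^-\Lambda$ the sites of $\Lambda$ with a nearest neighbour outside $\Lambda$. Hamiltonian: $H(\eta)=\frac J2\sum_{i,j\in\Lambda,|i-j|=1}[\eta(i)-\eta(j)]^2+J\sum_{i\in\partial^-\Lambda}\sum_{j\notin\Lambda,|i-j|=1}\eta(i)^2-\lambda\sum_{i}\eta(i)^2-h\sum_i\eta(i)$. Condition (C): $J$ sufficiently large compared to $\lambda,h>0$; $L>(2J/(\lambda-h))^3$; none of $\tfrac{2J}{\lambda+h},\tfrac{2J}{\lambda-h},\tfrac{2J+\lambda-h}{\lambda+h},\tfrac{J+\lambda+h}{h}$ is an integer. A path is a sequence of configurations with consecutive ones differing at exactly one site. $V_\eta=\Phi(\eta,\{\zeta:H(\zeta)<H(\eta)\})-H(\eta)$ where $\Phi(\eta,A)$ is the minimal over paths from $\eta$ to $A$ of the maximum of $H$ along the path. *)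

From HB Require Import structures.
From mathcomp Require Import all_boot all_order all_algebra.
From mathcomp Require Import boolp classical_sets reals.
Set Implicit Arguments. Unset Strict Implicit. Unset Printing Implicit Defensive.
Import Order.TTheory GRing.Theory Num.Theory.
Local Open Scope ring_scope.

(* Sites of Lambda = {1..L}^2 are represented by 'I_L * 'I_L, embedded in Z^2
   via (a,b) |-> (a+1, b+1). *)
Definition site (L : nat) := ('I_L * 'I_L)%type.

Definition emb (L : nat) (i : site L) : int * int :=
  ((nat_of_ord i.1).+1%:Z, (nat_of_ord i.2).+1%:Z).

Definition nbrs4 (x : int * int) : seq (int * int) :=
  [:: (x.1 + 1, x.2); (x.1 - 1, x.2); (x.1, x.2 + 1); (x.1, x.2 - 1)].

Definition inLam (L : nat) (x : int * int) : bool :=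
  [&& (1 <= x.1)%R, (x.1 <= L%:Z)%R, (1 <= x.2)%R & (x.2 <= L%:Z)%R].

Definition nbr (L : nat) (i j : site L) : bool := emb j \in nbrs4 (emb i).

(* spin values {-1,0,+1} encoded by 'I_3 via s |-> s - 1 *)
Definition spinv (R : nzRingType) (s : 'I_3) : R := (nat_of_ord s)%:R - 1.

Definition config (L : nat) := {ffun site L -> 'I_3}.

Definition H (R : realFieldType) (J lam h : R) (L : nat) (eta : config L) : R :=
  J / 2 * (\sum_(i : site L) \sum_(j : site L | nbr i j)
              (spinv R (eta i) - spinv R (eta j)) ^+ 2)
  + J * (\sum_(i : site L)
           (count (fun y => ~~ inLam L y) (nbrs4 (emb i)))%:R * spinv R (eta i) ^+ 2)
  - lam * (\sum_(i : site L) spinv R (eta i) ^+ 2)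
  - h * (\sum_(i : site L) spinv R (eta i)).

Definition adj (L : nat) (x y : config L) : bool := #|[set i | x i != y i]| == 1%N.

Definition is_path (L : nat) (eta : config L) (p : seq (config L)) : bool :=
  path (@adj L) eta p.

Definition path_max (R : realFieldType) (J lam h : R) (L : nat)
  (eta : config L) (p : seq (config L)) : R :=
  \big[Num.max/H J lam h eta]_(x <- p) H J lam h x.

Definition Phi (R : realType) (J lam h : R) (L : nat)
  (eta : config L) (A : set (config L)) : R :=
  inf [set m | exists p : seq (config L),
         [/\ is_path eta p, A (last eta p) & m = path_max J lam h eta p]].

Definition V (R : realType) (J lam h : R) (L : nat) (eta : config L) : R :=
  Phi J lam h eta [set z | H J lam h z < H J lam h eta] - H J lam h eta.

Definition downhill (R : realFieldType) (J lam h : R) (L : nat)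
  (eta : config L) (p : seq (config L)) : bool :=
  is_path eta p && path (fun x y => H J lam h y <= H J lam h x) eta p.

Definition not_integer (R : realFieldType) (x : R) : Prop :=
  ~ exists n : int, x = n%:~R.

(* the arithmetic part of Condition (C) (the "J sufficiently large" part is
   expressed by an existential threshold in the theorem) *)
Definition condC_arith (R : realFieldType) (J lam h : R) (L : nat) : Prop :=
  [/\ (2 * J / (lam - h)) ^+ 3 < L%:R,
      not_integer (2 * J / (lam + h)),
      not_integer (2 * J / (lam - h)),
      not_integer ((2 * J + lam - h) / (lam + h))
    & not_integer ((J + lam + h) / h)].

From HB Require Import structures.
From mathcomp Require Import all_boot all_order all_algebra.
From mathcomp Require Import boolp classical_sets reals.
From mathcomp Require Import zify ring lra.
Import Order.TTheory GRing.Theory Num.Theory.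
Local Open Scope ring_scope.

(* Call a nearest-neighbour bond (c, c') with spins
   +1/-1 frustrated.  Setting the spin at c to 0 changes the energy by
     J * (sum_(j ~ c) (2 s_c s_j - 1) - b_c) + lam + h s_c,
   where b_c is the number of neighbours of c outside Lambda.  The bond to c'
   contributes -3, every other term is at most 1, so the change is at most
   -J + lam + h < 0 as soon as c is "loose": it lies at the boundary (b_c > 0)
   or has another neighbour whose spin is not aligned with its own.
   A loose endpoint always exists: among frustrated bonds take one maximising
   the sum of coordinates; if neither endpoint were loose, both would be
   interior with all other neighbours aligned, and the bond translated one
   step in the orthogonal direction would be frustrated with a larger sum.
   Hence the one-step path flipping the loose site to 0 is downhill and ends
   below H(eta), and any such path forces V(eta) = 0. *)

Definition bcount {L : nat} (i : site L) : nat :=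
  count (fun y => ~~ inLam L y) (nbrs4 (emb i)).

Section Geometry.
Context {L : nat}.
Implicit Types i j a : site L.

Lemma nbrE i j :
  nbr i j = [|| (j.1 == i.1.+1 :> nat) && (j.2 == i.2 :> nat),
                (i.1 == j.1.+1 :> nat) && (j.2 == i.2 :> nat),
                (j.1 == i.1 :> nat) && (j.2 == i.2.+1 :> nat)
              | (j.1 == i.1 :> nat) && (i.2 == j.2.+1 :> nat)].
Proof. by rewrite /nbr /emb /nbrs4 !inE !xpair_eqE /=; apply/idP/idP => E; lia. Qed.

Lemma nbr_sym i j : nbr i j = nbr j i.
Proof. by rewrite !nbrE; apply/idP/idP => E; lia. Qed.

Lemma nbr_irr i : nbr i i = false.
Proof. by rewrite nbrE; apply/negbTE/negP => E; lia. Qed.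

Lemma emb_inj : injective (@emb L).
Proof.
move=> [[a ha] [b hb]] [[c hc] [d hd]]; rewrite /emb /= => -[E1 E2].
by congr pair; apply: val_inj => /=; lia.
Qed.

Lemma card_nbr a : (#|nbr a| <= 4)%N.
Proof.
rewrite cardE -(size_map (@emb L)) (_ : 4%N = size (nbrs4 (emb a))) //.
apply: uniq_leq_size; first by rewrite (map_inj_uniq emb_inj) enum_uniq.
by move=> x /mapP [j]; rewrite mem_enum inE => + ->.
Qed.

Lemma bcount0_interior i :
  bcount i = 0%N -> [&& (0 < i.1)%N, (i.1.+1 < L)%N, (0 < i.2)%N & (i.2.+1 < L)%N].
Proof. by rewrite /bcount /nbrs4 /emb /inLam /= => E; lia. Qed.

Lemma site_of_coords (x y : nat) :
  (x < L)%N -> (y < L)%N -> exists k : site L, k.1 = x :> nat /\ k.2 = y :> nat.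
Proof. by move=> hx hy; exists (Ordinal hx, Ordinal hy). Qed.

Definition wt (p : site L * site L) : nat := (p.1.1 + p.1.2 + p.2.1 + p.2.2)%N.

(* An interior bond can be translated one step in the orthogonal direction;
   the translate is a bond of larger weight whose endpoints are neighbours of
   the original ones, distinct from the other original endpoint. *)
Lemma shifted_bond {a a' : site L} :
  nbr a a' -> bcount a = 0%N -> bcount a' = 0%N ->
  exists k k', [/\ nbr a k, k != a', nbr a' k', k' != a
                 & nbr k k' && (wt (a, a') < wt (k, k'))%N].
Proof.
rewrite nbrE /wt => naa' /bcount0_interior ia /bcount0_interior ia'.
have [hor|ver] := eqVneq (a.2 : nat) a'.2.
- have [k [k1 k2]] := @site_of_coords a.1 a.2.+1 ltac:(lia) ltac:(lia).
  have [k' [k1' k2']] := @site_of_coords a'.1 a'.2.+1 ltac:(lia) ltac:(lia).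
  by exists k, k'; rewrite !nbrE /=; split; try (apply/eqP => E; subst); lia.
- have [k [k1 k2]] := @site_of_coords a.1.+1 a.2 ltac:(lia) ltac:(lia).
  have [k' [k1' k2']] := @site_of_coords a'.1.+1 a'.2 ltac:(lia) ltac:(lia).
  by exists k, k'; rewrite !nbrE /=; split; try (apply/eqP => E; subst); lia.
Qed.

End Geometry.

Section Spins.
Context {R : realFieldType}.
Local Notation spin s := (spinv R s).

Lemma spin_cases (s : 'I_3) : [\/ spin s = -1, spin s = 0 | spin s = 1].
Proof.
case: s => [[|[|[|m]]] hm] //; rewrite /spinv /=.
- by constructor 1; rewrite sub0r.
- by constructor 2; rewrite subrr.
- by constructor 3; rewrite -addrA subrr addr0.
Qed.

Lemma spin_mul_le1 (x y : 'I_3) : spin x * spin y <= 1.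
Proof. by case: (spin_cases x) => ->; case: (spin_cases y) => ->; lra. Qed.

Lemma spin_mul_neq1 {x y : 'I_3} : spin x * spin y != 1 -> spin x * spin y <= 0.
Proof. by case: (spin_cases x) => ->; case: (spin_cases y) => ->; rewrite ?eqxx //; lra. Qed.

Lemma spin_mulN1 {x y : 'I_3} : spin x * spin y = -1 -> spin x = 1 \/ spin x = -1.
Proof. by case: (spin_cases x) => ->; [right | lra | left]. Qed.

Definition spin0 : 'I_3 := Ordinal (isT : (1 < 3)%N).

Lemma spin0E : spin spin0 = 0.
Proof. by rewrite /spinv /= subrr. Qed.

End Spins.

Definition upd {L : nat} (eta : config L) (a : site L) (v : 'I_3) : config L :=
  [ffun k => if k == a then v else eta k].

Lemma adj_upd {L : nat} (eta : config L) (a : site L) (v : 'I_3) :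
  eta a != v -> adj eta (upd eta a v).
Proof.
move=> hav; rewrite /adj (_ : [set k | eta k != upd eta a v k] = [set a]) ?cards1 //.
apply/setP => k; rewrite !inE /upd ffunE.
by case: (eqVneq k a) => [->|]; rewrite ?eqxx.
Qed.

Section SingleSiteUpdate.
Context {R : realFieldType} {L : nat}.
Local Notation spin s := (spinv R s).
Variables (eta : config L) (a : site L) (v : 'I_3).

Lemma sum_upd (F : site L -> 'I_3 -> R) :
  \sum_i F i (upd eta a v i) = \sum_i F i (eta i) + F a v - F a (eta a).
Proof.
rewrite (bigD1 a) //= [in RHS](bigD1 a) //= /upd ffunE eqxx.
rewrite (eq_bigr (fun i => F i (eta i))) => [|i /negbTE ia]; last by rewrite ffunE ia.
ring.
Qed.

Lemma bond_sum_upd (g : 'I_3 -> 'I_3 -> R) :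
  (forall x y, g x y = g y x) ->
  \sum_i \sum_(j | nbr i j) g (upd eta a v i) (upd eta a v j) =
  \sum_i \sum_(j | nbr i j) g (eta i) (eta j)
  + 2 * \sum_(j | nbr a j) (g v (eta j) - g (eta a) (eta j)).
Proof.
move=> g_sym; pose d j := g v (eta j) - g (eta a) (eta j).
have E i j : nbr i j -> g (upd eta a v i) (upd eta a v j) =
   g (eta i) (eta j) + ((if i == a then d j else 0) + (if j == a then d i else 0)).
  move=> nij; rewrite /upd /d !ffunE.
  case: (eqVneq i a) => [ia|ia]; case: (eqVneq j a) => [ja|ja].
  - by subst; rewrite nbr_irr in nij.
  - by subst; ring.
  - by subst; rewrite (g_sym (eta i) v) (g_sym (eta i) (eta a)); ring.
  - by ring.
under eq_bigr => i _ do rewrite (eq_bigr _ (E i)) big_split /= big_split /=.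
rewrite big_split /= big_split /= mulr2n mulrDl mul1r /d; congr (_ + (_ + _)).
- rewrite (bigD1 a) //= eqxx [X in _ + X]big1 ?addr0 // => i /negbTE ->.
  exact: big1_eq.
- rewrite [RHS]big_mkcond; apply: eq_bigr => i _.
  rewrite big_mkcond /= (bigD1 a) //= eqxx nbr_sym big1 ?addr0 // => j /negbTE ->.
  by case: ifP.
Qed.

Lemma H_upd (J lam h : R) :
  H J lam h (upd eta a v) = H J lam h eta
   + J * \sum_(j | nbr a j) ((spin v - spin (eta j)) ^+ 2 - (spin (eta a) - spin (eta j)) ^+ 2)
   + J * (bcount a)%:R * (spin v ^+ 2 - spin (eta a) ^+ 2)
   - lam * (spin v ^+ 2 - spin (eta a) ^+ 2)
   - h * (spin v - spin (eta a)).
Proof.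
have sq_sym (x y : 'I_3) : (spin x - spin y) ^+ 2 = (spin y - spin x) ^+ 2.
  by rewrite -sqrrN opprB.
rewrite /H (bond_sum_upd _ sq_sym).
rewrite (sum_upd (fun i x => (count _ (nbrs4 (emb i)))%:R * spin x ^+ 2)).
rewrite (sum_upd (fun _ x => spin x ^+ 2)) (sum_upd (fun _ x => spin x)) /bcount.
by field.
Qed.

End SingleSiteUpdate.

Lemma local_sum_bound (R : realFieldType) (T : finType) (P : pred T) (t : T -> R)
    (c' : T) (b : R) :
  (#|P| <= 4)%N -> (forall j, P j -> t j <= 1) -> P c' -> t c' = -3 -> 0 <= b ->
  (1 <= b \/ exists k, [/\ P k, k != c' & t k <= -1]) ->
  \sum_(j | P j) t j - b <= -1.
Proof.
move=> cardP t_le1 Pc' tc' b_ge0 defect.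
pose u j := 1 - t j.
have u_ge0 (Q : pred T) : (forall j, Q j -> P j) -> 0 <= \sum_(j | Q j) u j.
  by move=> QP; apply: sumr_ge0 => j /QP /t_le1; rewrite subr_ge0.
have sum_tE : \sum_(j | P j) t j = #|P|%:R - \sum_(j | P j) u j.
  by rewrite sumrB sumr_const opprB addrC subrK.
rewrite -(ler_nat R) in cardP.
rewrite sum_tE (bigD1 c') //= /u tc'.
case: defect => [b_ge1 | [k [Pk kc' tk]]].
- have : 0 <= \sum_(j | P j && (j != c')) u j by apply: u_ge0 => j /andP[].
  lra.
- rewrite (bigD1 k) /= ?Pk ?kc' //.
  have : 0 <= \sum_(j | (P j && (j != c')) && (j != k)) u j.
    by apply: u_ge0 => j /andP[/andP[]].
  lra.
Qed.

Section FrustratedBonds.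
Variable R : realFieldType.
Context {L : nat}.
Local Notation spin s := (spinv R s).
Implicit Types (eta : config L) (c : site L).

Definition frustrated eta c (c' : site L) : bool :=
  nbr c c' && (spin (eta c) * spin (eta c') == -1).

Definition loose eta c (c' : site L) : bool :=
  (0 < bcount c)%N || [exists k, [&& nbr c k, k != c' & spin (eta c) * spin (eta k) != 1]].

Lemma frustrated_sym eta c (c' : site L) : frustrated eta c c' = frustrated eta c' c.
Proof. by rewrite /frustrated nbr_sym mulrC. Qed.

Lemma not_looseP eta c (c' : site L) :
  ~~ loose eta c c' ->
  bcount c = 0%N /\ forall k, nbr c k -> k != c' -> spin (eta c) * spin (eta k) = 1.
Proof.
rewrite negb_or -eqn0Ngt => /andP[/eqP b0 /existsPn aligned]; split=> // k nck kc'.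
by apply/eqP; move: (aligned k); rewrite nck kc' /= negbK.
Qed.

Lemma H_flip0 (J lam h : R) eta c :
  spin (eta c) ^+ 2 = 1 ->
  H J lam h (upd eta c spin0) = H J lam h eta
    + J * (\sum_(j | nbr c j) (2 * (spin (eta c) * spin (eta j)) - 1) - (bcount c)%:R)
    + lam + h * spin (eta c).
Proof.
move=> sq1; rewrite H_upd spin0E.
have bondE j : (0 - spin (eta j)) ^+ 2 - (spin (eta c) - spin (eta j)) ^+ 2
             = 2 * (spin (eta c) * spin (eta j)) - 1.
  by rewrite -{2}sq1; ring.
under eq_bigr => j _ do rewrite bondE.
by rewrite sq1 expr0n /=; ring.
Qed.

Lemma loose_flip_decreases (J lam h : R) eta c (c' : site L) :
  0 < lam -> 0 < h -> lam + h < J -> frustrated eta c c' -> loose eta c c' ->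
  H J lam h (upd eta c spin0) < H J lam h eta.
Proof.
move=> lam_gt0 h_gt0 hJ /andP[ncc' /eqP pcc'] lc.
have [sq1 hs] : spin (eta c) ^+ 2 = 1 /\ h * spin (eta c) <= h.
  by case: (spin_mulN1 pcc') => ->; rewrite ?sqrrN expr1n ?mulr1 ?mulrN1; split => //; lra.
have bound : \sum_(j | nbr c j) (2 * (spin (eta c) * spin (eta j)) - 1) - (bcount c)%:R <= -1.
  apply: (@local_sum_bound R _ (nbr c) (fun j => 2 * (spin (eta c) * spin (eta j)) - 1)
           c' _ (card_nbr c) _ ncc'); rewrite ?pcc' ?ler0n //.
  - by move=> j _ /=; have := spin_mul_le1 (R := R) (eta c) (eta j); lra.
  - by lra.
  case/orP: lc => [b_gt0 | /existsP [k /and3P [nck kc' sk]]].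
    by left; rewrite ler1n.
  by right; exists k; split => //; have := spin_mul_neq1 sk; lra.
have := ler_wpM2l (ltW (lt_trans (addr_gt0 lam_gt0 h_gt0) hJ)) bound.
by rewrite H_flip0 //; lra.
Qed.

(* Extremal argument: a frustrated bond of maximal weight has a loose
   endpoint, for otherwise its orthogonal translate would be a frustrated bond
   of larger weight. *)
Lemma exists_loose_bond eta i (j : site L) :
  frustrated eta i j -> exists c c', frustrated eta c c' && loose eta c c'.
Proof.
move=> fij.
case: (@arg_maxnP _ (i, j) (fun p => frustrated eta p.1 p.2) wt fij).
move=> [a a'] /= faa' wt_max.
have [la | /not_looseP [b0 aligned]] := boolP (loose eta a a').
  by exists a, a'; rewrite faa'.
have [la' | /not_looseP [b0' aligned']] := boolP (loose eta a' a).
  by exists a', a; rewrite frustrated_sym faa'.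
have /andP [naa' /eqP paa'] := faa'.
have [k [k' [nak ka' na'k' k'a /andP [nkk' wt_lt]]]] := shifted_bond naa' b0 b0'.
have fkk' : frustrated eta k k'.
  rewrite /frustrated nkk' /=; apply/eqP.
  have : spin (eta a) * spin (eta a') * (spin (eta k) * spin (eta k'))
       = spin (eta a) * spin (eta k) * (spin (eta a') * spin (eta k')) by ring.
  rewrite paa' (aligned k nak ka') (aligned' k' na'k' k'a) mulr1 mulN1r.
  by move=> /eqP; rewrite eqr_oppLR => /eqP.
by have := wt_max (k, k') fkk'; rewrite leqNgt wt_lt.
Qed.

End FrustratedBonds.

Arguments loose_flip_decreases {R L J lam h eta c c'}.
Arguments exists_loose_bond {R L eta i j}.

Section Paths.
Context {R : realType} (J lam h : R) {L : nat}.
Local Notation H := (H J lam h).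
Implicit Types (eta : config L) (p : seq (config L)).

Lemma path_max_ge eta p : H eta <= path_max J lam h eta p.
Proof.
rewrite /path_max; elim: p => [|x p IH]; first by rewrite big_nil.
by rewrite big_cons le_max IH orbT.
Qed.

Lemma downhill_path_max eta p : downhill J lam h eta p -> path_max J lam h eta p = H eta.
Proof.
case/andP => _ dh; apply/le_anti; rewrite path_max_ge andbT.
have le_trans_rev : transitive (fun x y : config L => H y <= H x).
  by move=> y x z xy yz; apply: le_trans yz xy.
have /allP below := order_path_min le_trans_rev dh.
by rewrite /path_max big_seq; apply: bigmax_le => // x /below.
Qed.

Lemma V_eq0_of_descent eta p :
  downhill J lam h eta p -> H (last eta p) < H eta -> V J lam h eta = 0.
Proof.
move=> dp lt_last; rewrite /V /Phi; set S := (X in inf X).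
have S_lb : lbound S (H eta) by move=> m [q [_ _ ->]]; apply: path_max_ge.
have S_H : S (H eta).
  by exists p; split; [case/andP: dp | exact: lt_last | rewrite downhill_path_max].
apply/eqP; rewrite subr_eq0 eq_le; apply/andP; split.
- by apply: ge_inf S_H; exists (H eta).
- by apply: lb_le_inf; [exists (H eta) | ].
Qed.

End Paths.

Theorem lemma4p1 (R : realType) (lam h : R) :
  0 < lam -> 0 < h -> lam / 2 < h -> h < lam ->
  exists J0 : R, forall J : R, J0 < J ->
  forall L : nat, condC_arith J lam h L ->
  forall eta : config L,
    (exists i j : site L, [/\ nbr i j, spinv R (eta i) = 1 & spinv R (eta j) = -1]) ->
    (exists p : seq (config L),
        downhill J lam h eta p /\ H J lam h (last eta p) < H J lam h eta)
    /\ V J lam h eta = 0.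
Proof.
move=> lam_gt0 h_gt0 _ _; exists (lam + h) => J hJ L _ eta [i [j [nij si sj]]].
have fij : frustrated R eta i j by rewrite /frustrated nij si sj mul1r eqxx.
have [c [c' /andP [fcc' lcc']]] := exists_loose_bond fij.
have drop := loose_flip_decreases lam_gt0 h_gt0 hJ fcc' lcc'.
have c_ne0 : eta c != spin0.
  apply: contraTneq fcc' => c0.
  by rewrite /frustrated c0 spin0E mul0r eq_sym oppr_eq0 oner_eq0 andbF.
have desc : downhill J lam h eta [:: upd eta c spin0].
  by rewrite /downhill /is_path /= adj_upd // (ltW drop).
split; first by exists [:: upd eta c spin0].
exact: V_eq0_of_descent desc drop.
Qed.
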